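(* Let $k$ be a field, $r \ge 1$, $s \le r$, and $x_1,\dots,x_r \in k$. For $1 \le j \le r$ and $d \ge 0$, let $e^d_{r,j}$ be the elementary symmetric polynomial of degree $d$ in the $r-1$ variables $x_1,\dots,x_r$ with $x_j$ omitted, and let $A_r^s(x_1,\dots,x_r)$ be the $s \times r$ matrix whose $(d+1,j)$ entry is $e^d_{r,j}(x_1,\dots,x_r)$ for $0 \le d \le s-1$, $1 \le j \le r$. Then $A_r^s(x_1,\dots,x_r)$ has full rank (rank $s$) if and only if $\#\{x_1,\dots,x_r\} \ge s$. *)

From mathcomp Require Import all_boot all_order all_algebra.
Set Implicit Arguments. Unset Strict Implicit. Unset Printing Implicit Defensive.
Import GRing.Theory.
Local Open Scope ring_scope.

Definition esym_omit (F : fieldType) (r : nat) (x : 'I_r -> F) (j : 'I_r)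
  (d : nat) : F :=
  \sum_(S : {set 'I_r} | (S \subset [set~ j]) && (#|S| == d))
     \prod_(i in S) x i.

Definition Amat (F : fieldType) (r s : nat) (x : 'I_r -> F) : 'M[F]_(s, r) :=
  \matrix_(d < s, j < r) esym_omit x j d.

From mathcomp Require Import all_boot all_order all_algebra.
Set Implicit Arguments. Unset Strict Implicit. Unset Printing Implicit Defensive.
Import GRing.Theory.
Local Open Scope ring_scope.

(* Dividing prod_i (1 + x_i t) by (1 + x_j t) gives
   e^d_{r,j} = sum_k (-x_j)^k e^(d-k)(x_1..x_r), so A_r^s = L V with L an
   invertible lower triangular s x s matrix and V the s x r Vandermonde matrix
   of the x_j.  Hence rank A_r^s = rank V.  Columns of V for equal nodes are
   equal, so rank V is at most the number of distinct nodes, and s distinct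
   nodes give an invertible s x s Vandermonde minor. *)

Lemma mxrank_colsub (F : fieldType) (m n n' : nat) (g : 'I_n' -> 'I_n)
    (A : 'M[F]_(m, n)) :
  (\rank (colsub g A) <= \rank A)%N.
Proof. by rewrite -{1}[A]mulmx1 -mulmx_colsub; apply: mxrankM_maxl. Qed.

Lemma colsub_Vandermonde (R : pzRingType) (m n n' : nat) (g : 'I_n' -> 'I_n)
    (a : 'rV[R]_n) :
  colsub g (Vandermonde m a) = Vandermonde m (colsub g a).
Proof. by apply/matrixP => i j; rewrite !mxE. Qed.

Lemma Vandermonde_unit (F : fieldType) (m : nat) (a : 'rV[F]_m) :
  injective (a ord0) -> Vandermonde m a \in unitmx.
Proof.
move=> a_inj; rewrite unitmxE det_Vandermonde unitfE.
apply/prodf_neq0 => i _; apply/prodf_neq0 => j lt_ij; rewrite subr_eq0.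
by apply: contraTN lt_ij => /eqP/a_inj ->; rewrite ltnn.
Qed.

Section VandermondeRank.
Variables (F : fieldType) (m n : nat) (a : 'rV[F]_n).

Let nodes := undup [seq a ord0 j | j : 'I_n].

Let node_in (j : 'I_n) : a ord0 j \in nodes.
Proof. by rewrite mem_undup; apply: map_f; rewrite mem_enum. Qed.

Lemma rank_Vandermonde_le_distinct :
  (\rank (Vandermonde m a) <= size (undup [seq a ord0 j | j : 'I_n]))%N.
Proof.
pose node_idx j : 'I_(size nodes) := Ordinal (etrans (index_mem _ _) (node_in j)).
have -> : Vandermonde m a = colsub node_idx (Vandermonde m (\row_l nodes`_l)).
  by rewrite colsub_Vandermonde; congr Vandermonde; apply/matrixP => i j;
    rewrite !mxE nth_index ?node_in // [i]ord1.
exact: leq_trans (mxrank_colsub _ _) (rank_leq_col _).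
Qed.

Lemma rank_Vandermonde_full :
  (m <= size (undup [seq a ord0 j | j : 'I_n]))%N -> \rank (Vandermonde m a) = m.
Proof.
move=> m_le; have node_lt (k : 'I_m) : (k < size nodes)%N.
  exact: leq_trans (ltn_ord k) m_le.
have preimage (k : 'I_m) : exists j, a ord0 j == nodes`_k.
  have := mem_nth 0 (node_lt k).
  by rewrite mem_undup => /mapP[j _ ->]; exists j.
pose pick_col k := xchoose (preimage k).
have minor_unit : colsub pick_col (Vandermonde m a) \in unitmx.
  rewrite colsub_Vandermonde; apply: Vandermonde_unit => k l.
  rewrite !mxE (eqP (xchooseP (preimage k))) (eqP (xchooseP (preimage l))).
  by move/eqP; rewrite nth_uniq ?node_lt ?undup_uniq // => /eqP/val_inj.
apply/eqP; rewrite eqn_leq rank_leq_row -{1}(mxrank_unit minor_unit).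
exact: mxrank_colsub.
Qed.

End VandermondeRank.

Section OmittedVariable.
Variables (F : fieldType) (r : nat) (x : 'I_r -> F).

Definition esym_in (W : {set 'I_r}) (d : nat) : F :=
  \sum_(S : {set 'I_r} | (S \subset W) && (#|S| == d)) \prod_(i in S) x i.

Lemma esym_in0 (W : {set 'I_r}) : esym_in W 0 = 1.
Proof.
rewrite /esym_in (big_pred1 set0) ?big_set0 // => S /=.
by rewrite cards_eq0 andbC; case: eqP => // ->; rewrite sub0set.
Qed.

Lemma esym_inD1 (W : {set 'I_r}) (j : 'I_r) (d : nat) : j \in W ->
  esym_in W d.+1 = esym_in (W :\ j) d.+1 + x j * esym_in (W :\ j) d.
Proof.
move=> jW; rewrite /esym_in (bigID (fun S : {set 'I_r} => j \in S)) /= addrC.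
congr (_ + _).
  by apply: eq_bigl => S; rewrite subsetD1 andbAC.
rewrite mulr_sumr (reindex_onto (fun S => j |: S) (fun S => S :\ j)) /=; last first.
  by move=> S /andP[_ jS]; rewrite setD1K.
apply: eq_big => [S|S /andP[_ /eqP <-]]; last by rewrite big_setU1 ?setD11.
rewrite setU11 andbT subsetD1 subUset sub1set jW /=.
have [jS|jS] := boolP (j \in S); last first.
  by rewrite setU1K // eqxx !andbT cardsU1 jS.
have -> : ((j |: S) :\ j == S) = false.
  by apply/negbTE; apply: contraTneq jS => <-; rewrite setD11.
by rewrite !andbF.
Qed.

Lemma esym_omitE (j : 'I_r) (d : nat) :
  esym_omit x j d = \sum_(k < d.+1) (- x j) ^+ k * esym_in setT (d - k).
Proof.
have omitE e : esym_omit x j e = esym_in (setT :\ j) e by rewrite /esym_in setTD.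
elim: d => [|d IH]; first by rewrite omitE big_ord1 !esym_in0 mul1r.
rewrite big_ord_recl mul1r subn0 (esym_inD1 d (in_setT j)) -!omitE.
have -> : \sum_(k < d.+1) (- x j) ^+ lift ord0 k * esym_in setT (d.+1 - lift ord0 k)
    = - x j * esym_omit x j d.
  by rewrite IH mulr_sumr; apply: eq_bigr => k _; rewrite /= exprS subSS mulrA.
by rewrite mulNr addrK.
Qed.

Definition esym_coef_mx (s : nat) : 'M[F]_s :=
  \matrix_(d < s, k < s) if (k <= d)%N then (-1) ^+ k * esym_in setT (d - k) else 0.

Lemma esym_coef_mx_unit (s : nat) : esym_coef_mx s \in unitmx.
Proof.
rewrite unitmxE det_trig; last by apply/is_trig_mxP => d k lt_dk; rewrite mxE leqNgt lt_dk.
apply/unitr_prod => d _; rewrite mxE leqnn subnn esym_in0 mulr1.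
exact/unitrX/unitrN1.
Qed.

Lemma Amat_factor (s : nat) :
  Amat s x = esym_coef_mx s *m Vandermonde s (\row_j x j).
Proof.
apply/matrixP => d j; rewrite !mxE esym_omitE.
rewrite (big_ord_widen s (fun k => (- x j) ^+ k * esym_in setT (d - k))) //.
rewrite big_mkcond /=; apply: eq_bigr => k _; rewrite !mxE ltnS.
by case: ifP => _; rewrite ?mul0r // [(- x j) ^+ _]exprNn mulrAC.
Qed.

Lemma rank_Amat (s : nat) :
  \rank (Amat s x) = \rank (Vandermonde s (\row_j x j)).
Proof.
rewrite Amat_factor; apply/eqmx_rank/eqmxP/eqmxMfull.
by rewrite row_full_unit esym_coef_mx_unit.
Qed.

End OmittedVariable.

Theorem corollary2p4 (F : fieldType) (r s : nat) (x : 'I_r -> F) :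
  (1 <= r)%N -> (s <= r)%N ->
  (\rank (Amat s x) = s <-> (s <= size (undup [seq x i | i : 'I_r]))%N).
Proof.
move=> _ _; have nodesE : [seq (\row_j x j) ord0 i | i : 'I_r] = [seq x i | i : 'I_r].
  by apply: eq_map => i; rewrite mxE.
rewrite rank_Amat -nodesE; split => [<-|].
  exact: rank_Vandermonde_le_distinct.
exact: rank_Vandermonde_full.
Qed.
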